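(* Consider the following two-player game between a random player $\mathfrak{R}$ and a deterministic player $\mathfrak{D}$. Initially there is a pile of $n \geq 1$ elements. The players alternate turns, with $\mathfrak{R}$ moving first. On each turn of $\mathfrak{R}$, if the pile currently contains exactly $m$ elements, $\mathfrak{R}$ removes $k$ elements, where $k$ is chosen uniformly at random from $\{1, \ldots, m\}$, independently of all previous choices. On each turn of $\mathfrak{D}$, $\mathfrak{D}$ removes exactly one element. The player who removes the last element (so that the pile is empty at the end of its turn) wins. Let $D_n$ denote the probability that $\mathfrak{D}$ wins when the game starts with $n$ elements. Then for every $n \geq 1$, $$D_n = \sum_{k=0}^{n}\frac{(-1)^k}{k!} = \frac{d_n}{n!},$$ where $d_n$ is the number of derangements (fixed-point-free permutations) of an $n$-element set. In particular, $\lim_{n\to\infty} D_n = e^{-1}$. *)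

From HB Require Import structures.
From mathcomp Require Import all_boot all_order all_algebra all_fingroup.
From mathcomp Require Import all_classical all_reals all_analysis.
Set Implicit Arguments. Unset Strict Implicit. Unset Printing Implicit Defensive.
Import Order.TTheory GRing.Theory Num.Theory.
Local Open Scope ring_scope.

(* dwin_R fuel m = probability that the deterministic player D wins when the
   random player R is about to move and the pile has m >= 1 elements.
   R removes k, uniformly in {1..m} (probability 1/m each):
   - if k = m, R took the last element: R wins (contribution 0);
   - otherwise D moves on a pile of m-k >= 1 elements and removes one:
     if m-k = 1 D took the last element and wins (contribution 1),
     else the game continues with R to move on m-k-1 elements.
   [fuel] only ensures structural recursion; fuel >= m suffices. *)
Fixpoint dwin_R (R : realType) (fuel m : nat) : R :=
  match fuel with
  | 0 => 0
  | f.+1 =>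
      m%:R^-1 * \sum_(1 <= k < m.+1)
        (if (k == m)%N then 0
         else if (m - k == 1)%N then 1
         else dwin_R R f (m - k - 1)%N)
  end.

Definition D_prob (R : realType) (n : nat) : R := dwin_R R n n.

Definition derangements (n : nat) : nat :=
  #|[set s : 'S_n | [forall i, s i != i]]|.

From HB Require Import structures.
From mathcomp Require Import all_boot all_order all_algebra all_fingroup.
From mathcomp Require Import all_classical all_reals all_analysis.
From mathcomp Require Import ring zify.
Import Order.TTheory GRing.Theory Num.Theory.
Import numFieldNormedType.Exports.
Local Open Scope ring_scope.

(* Conditioning on the first move of R, the winning probability D_m of D
   satisfies m D_m = D_0 + ... + D_(m-2) with D_0 = 1, and this recurrence
   determines the sequence.  The partial sums of sum_k (-1)^k/k! satisfy the
   same recurrence because (k+1) t_(k+1) = - t_k for t_k = (-1)^k/k!.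
   Inclusion-exclusion over the sets of fixed points gives
   d_n = sum_k (-1)^k C(n,k) (n-k)! = n! sum_(k<=n) (-1)^k/k!, and the limit
   is the exponential series at -1. *)

Section SubsetSums.
Variable R : comPzRingType.

Lemma sum_subset_expr (T : finType) (B : {set T}) (x : R) :
  \sum_(A : {set T} | A \subset B) x ^+ #|A| = (1 + x) ^+ #|B|.
Proof.
rewrite -prodr_const [RHS]big_mkcond /=.
rewrite (eq_bigr (fun i => (if i \in B then x else 0) + 1)); last first.
  by move=> i _; case: (i \in B); rewrite ?add0r // addrC.
rewrite bigA_distr big_mkcond /=; apply: eq_bigr => A _.
rewrite -big_mkcond /=; case: (boolP (A \subset B)) => [AB | /subsetPn [i iA iNB]].
  by rewrite -prodr_const; apply: eq_bigr => i iA; rewrite (fintype.subsetP AB).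
by rewrite (bigD1 i iA) /= (negbTE iNB) mul0r.
Qed.

Lemma sum_subset_sign (T : finType) (B : {set T}) :
  \sum_(A : {set T} | A \subset B) (-1 : R) ^+ #|A| = (#|B| == 0)%:R.
Proof. by rewrite sum_subset_expr subrr expr0n. Qed.

End SubsetSums.

Lemma card_inclusion_exclusion (R : comPzRingType) (S T : finType)
    (F : S -> {set T}) :
  #|[set s | #|F s| == 0]|%:R
  = \sum_(A : {set T}) (-1 : R) ^+ #|A| *+ #|[set s | A \subset F s]|.
Proof.
transitivity (\sum_s \sum_(A : {set T} | A \subset F s) (-1 : R) ^+ #|A|).
  rewrite -sumr_const big_mkcond /=; apply: eq_bigr => s _.
  by rewrite sum_subset_sign inE; case: (_ == _).
rewrite (exchange_big_dep xpredT) //=; apply: eq_bigr => A _.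
by rewrite -sumr_const; apply: eq_bigl => s; rewrite inE.
Qed.

Lemma sum_card_set (V : nmodType) (T : finType) (F : nat -> V) :
  \sum_(A : {set T}) F #|A| = \sum_(0 <= k < #|T|.+1) F k *+ 'C(#|T|, k).
Proof.
pose size_class (A : {set T}) : 'I_#|T|.+1 := inord #|A|.
rewrite big_mkord (partition_big size_class xpredT) //=.
apply: eq_bigr => k _; rewrite -card_draws -sumr_const.
by apply: eq_big => [A | A /eqP <-]; rewrite ?inE -?val_eqE /= inordK // ltnS max_card.
Qed.

Lemma card_perm_fixing (T : finType) (A : {set T}) :
  #|[set s : {perm T} | A \subset [set x | s x == x]]| = (#|T| - #|A|)`!.
Proof.
rewrite -(cardsC A) addKn -card_perm; apply: eq_card => s; rewrite !inE.
apply/idP/idP => [fixA | sCA].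
  apply/fintype.subsetP => x; rewrite !inE; apply: contra => xA.
  by move/fintype.subsetP/(_ x xA): fixA; rewrite inE.
apply/fintype.subsetP => x xA; rewrite inE; apply: contraT => sx.
by move/fintype.subsetP/(_ x sx): sCA; rewrite inE xA.
Qed.

Lemma derangementsE (R : numFieldType) n :
  (derangements n)%:R = n`!%:R * \sum_(0 <= k < n.+1) (-1 : R) ^+ k / k`!%:R.
Proof.
have -> : derangements n = #|[set s : 'S_n | #|[set i | s i == i]| == 0]|.
  apply: eq_card => s; rewrite !inE cards_eq0.
  apply/forallP/eqP => [sN | /setP fix0 i].
    by apply/setP => i; rewrite !inE (negbTE (sN i)).
  by move: (fix0 i); rewrite !inE => ->.
rewrite card_inclusion_exclusion.
under eq_bigr => A _ do rewrite card_perm_fixing card_ord.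
rewrite (@sum_card_set _ _ (fun k => (-1 : R) ^+ k *+ (n - k)`!)) card_ord mulr_sumr.
apply: eq_big_nat => k /andP [_]; rewrite ltnS => kn.
rewrite -mulrnA -(bin_fact kn) -mulr_natl !natrM; field.
by rewrite pnatr_eq0 -lt0n fact_gt0.
Qed.

Section SumRecurrence.
Variable R : numDomainType.

Definition sum_recurrence (u : nat -> R) :=
  forall m, (0 < m)%N -> m%:R * u m = \sum_(0 <= i < m.-1) u i.

Lemma sum_recurrence_unique u v :
  u 0%N = v 0%N -> sum_recurrence u -> sum_recurrence v -> u =1 v.
Proof.
move=> uv0 urec vrec m; elim/ltn_ind: m => [[//|m] IH].
apply: (mulfI (_ : m.+1%:R != 0)); first by rewrite pnatr_eq0.
rewrite urec // vrec //; apply: eq_big_nat => i /andP [_ im].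
by apply: IH; rewrite /= ltnS ltnW.
Qed.

End SumRecurrence.
Arguments sum_recurrence {R}.

Lemma exp_coeffS (R : realType) (x : R) n :
  n.+1%:R * exp_coeff x n.+1 = x * exp_coeff x n.
Proof.
rewrite /exp_coeff /= factS natrM exprS; field.
by rewrite nat1r !pnatr_eq0 -lt0n fact_gt0.
Qed.

Lemma sum_recurrence_series_expN1 (R : realType) :
  sum_recurrence (fun m => series (exp_coeff (-1 : R)) m.+1).
Proof.
elim=> // -[_ _ | m IH _] /=.
  have e1 := @exp_coeffS R (-1) 0; rewrite mulr1n mul1r mulN1r in e1.
  by rewrite mul1r [RHS]big_geq // /series /= big_nat_recr //= big_nat1 e1 addrN.
rewrite seriesSr mulrDr exp_coeffS big_nat_recr //= -IH //.
by rewrite [series _ m.+2]seriesSr -nat1r; ring.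
Qed.

Section Game.
Variable R : realType.

Lemma dwin_R_fuel f g m :
  (m <= f)%N -> (m <= g)%N -> dwin_R R f m = dwin_R R g m.
Proof.
elim: f g m => [|f IH] [|g] m //=; rewrite ?leqn0.
- by move=> /eqP -> _; rewrite big_geq ?mulr0.
- by move=> _ /eqP ->; rewrite big_geq ?mulr0.
move=> mf mg; congr (_ * _); apply: eq_big_nat => k /andP [k1 km].
by case: eqP => // _; case: eqP => // _; apply: IH; lia.
Qed.

(* Probability that D wins when R is to move on m elements; an empty pile on
   R's turn means that D has just taken the last element. *)
Definition D_win m : R := if m is 0 then 1 else D_prob R m.

(* R leaves i.+1 elements with probability 1/m, D takes one, and R then faces
   i elements; leaving nothing makes R win. *)
Lemma sum_recurrence_D_win : sum_recurrence D_win.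
Proof.
case=> // n _; rewrite /= /D_prob /= mulVKf ?pnatr_eq0 //.
rewrite big_nat_recr //= eqxx addr0 big_add1 /= [RHS]big_nat_rev /=.
apply: eq_big_nat => k /andP [_ kn]; rewrite eqSS ltn_eqF // add0n.
rewrite subSS (_ : n - k = (n - k.+1).+1)%N; last lia.
case nk: (n - k.+1)%N => [|j] //=; rewrite subn1 /=.
by apply: dwin_R_fuel; lia.
Qed.

Lemma D_win_series_expN1 m : D_win m = series (exp_coeff (-1 : R)) m.+1.
Proof.
apply: (@sum_recurrence_unique R D_win (fun m => series (exp_coeff (-1)) m.+1)).
- by rewrite /series /= big_nat1 /exp_coeff /= expr0 divr1.
- exact: sum_recurrence_D_win.
- exact: sum_recurrence_series_expN1.
Qed.

End Game.

Local Open Scope classical_set_scope.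

Theorem mainTheorem1 (R : realType) :
  (forall n : nat, (1 <= n)%N ->
     D_prob R n = \sum_(0 <= k < n.+1) (-1) ^+ k / (k`!)%:R
     /\ D_prob R n = (derangements n)%:R / (n`!)%:R)
  /\ (D_prob R @ \oo --> expR (-1 : R)).
Proof.
have D_probE n : D_prob R n.+1 = series (exp_coeff (-1)) n.+2.
  exact: (D_win_series_expN1 R n.+1).
split=> [[//|n] _ | ].
  split; first exact: D_probE.
  by rewrite D_probE derangementsE [RHS]mulrC mulKf // pnatr_eq0 -lt0n fact_gt0.
rewrite -cvg_shiftS (eq_cvg _ _ D_probE) (cvg_shiftS (fun n => series _ n.+1)) cvg_shiftS.
exact: is_cvg_series_exp_coeff.
Qed.
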